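(* For integers $k\ge1$, $1\le j\le k$, and $x\in\mathbb R$, \[ \sum_{i=0}^{k-1}x^i\,(2k-j)_{k-i}\,\frac{(k-1+i)!}{(k-1-i)!\,i!}=\frac{(j-1)!\,(2k-j)!}{(k-1)!}\sum_{\ell=0}^{j-1}\binom{k-1}{\ell}\binom{k-1}{j-1-\ell}x^\ell(1+x)^{k-1-\ell}, \] where $(n)_r=n(n-1)\cdots(n-r+1)$ denotes the falling factorial, $(n)_0=1$. *)

From HB Require Import structures.
From mathcomp Require Import all_boot all_order all_algebra.
Set Implicit Arguments. Unset Strict Implicit. Unset Printing Implicit Defensive.

From HB Require Import structures.
From mathcomp Require Import all_boot all_order all_algebra.
From mathcomp Require Import ring zify.
Import Order.TTheory GRing.Theory Num.Theory.
Local Open Scope ring_scope.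

(* Write n = k - 1 and m = j - 1, so that 0 <= m <= n.  Both sides of the
   identity are polynomials of degree at most n in x, and we compare the
   coefficients of x^i for i <= n.
   - By the binomial theorem, x^l (1 + x)^(n - l) has coefficient
     [l <= i] C(n - l, i - l) at x^i  (expr_shifted_binomial).
   - Hence the coefficient of x^i in the sum on the right is
     sum_l C(n, l) C(n, m - l) C(n - l, i - l); by the "subset of a subset"
     identity C(n, l) C(n - l, i - l) = C(n, i) C(i, l) and Vandermonde's
     convolution this equals C(n, i) C(i + n, m)  (coef_binomial_convolution).
   - Finally a purely factorial identity (falling_factorial_identity) shows
     that m! (2n+1-m)! / n! * C(n, i) C(i + n, m) is the coefficient
     (2n+1-m)_(n+1-i) (n+i)! / ((n-i)! i!) appearing on the left. *)

Lemma bin_subset_subset n i l : (l <= i)%N ->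
  ('C(n, l) * 'C(n - l, i - l) = 'C(n, i) * 'C(i, l))%N.
Proof.
move=> le_li; have [le_in | lt_ni] := leqP i n; last first.
  rewrite (bin_small lt_ni) mul0n; have [lt_nl | le_ln] := ltnP n l.
    by rewrite bin_small.
  by rewrite (@bin_small (n - l)) ?muln0 //; lia.
have le_ln : (l <= n)%N by rewrite (leq_trans le_li).
have facts_gt0 : (0 < l`! * (i - l)`! * (n - i)`!)%N by rewrite !muln_gt0 !fact_gt0.
apply/eqP; rewrite -(eqn_pmul2r facts_gt0); apply/eqP.
have sub_sub : (n - l - (i - l) = n - i)%N by lia.
have := bin_fact le_ln; have := bin_fact le_in; have := bin_fact le_li.
have := bin_fact (leq_sub2r l le_in); rewrite sub_sub.
move=> fact_nl_il fact_il fact_ni fact_nl.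
transitivity ('C(n, l) * (l`! * ('C(n - l, i - l) * ((i - l)`! * (n - i)`!))))%N.
  by ring.
rewrite fact_nl_il fact_nl -fact_ni -fact_il; ring.
Qed.

Lemma expr_shifted_binomial (R : comPzRingType) (x : R) n l : (l <= n)%N ->
  x ^+ l * (1 + x) ^+ (n - l) =
  \sum_(i < n.+1) x ^+ i * (((l <= i)%N * 'C(n - l, i - l))%N)%:R.
Proof.
move=> le_ln; rewrite addrC exprD1n big_distrr /=.
rewrite -(big_mkord xpredT (fun i => x ^+ i * (((l <= i)%N * 'C(n - l, i - l))%N)%:R)).
rewrite (@big_cat_nat _ _ _ l 0 n.+1) ?(leq_trans le_ln) //=.
rewrite [X in _ = X + _]big1_seq ?add0r => [|i]; last first.
  by rewrite mem_index_iota /= => lt_il; rewrite leqNgt lt_il mul0n mulr0.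
rewrite -[in RHS](add0n l) big_addn subSn // big_mkord.
apply: eq_bigr => t _.
by rewrite leq_addl mul1n addnK exprD add0n mulr_natr mulrnAr (mulrC (x ^+ t)).
Qed.

Lemma coef_binomial_convolution n m i :
  (\sum_(l < m.+1) 'C(n, l) * 'C(n, m - l) * ((l <= i) * 'C(n - l, i - l))
  = 'C(n, i) * 'C(i + n, m))%N.
Proof.
rewrite -binomial.Vandermonde big_distrr /=; apply: eq_bigr => l _.
have [le_li | lt_il] := leqP l i; last by rewrite (bin_small lt_il) !muln0.
by rewrite mul1n mulnAC bin_subset_subset // -!mulnA.
Qed.

(* The factorial identity matching the coefficients of both sides, with the
   denominators of the theorem cleared. *)
Lemma falling_factorial_identity n m i : (m <= n)%N -> (i <= n)%N ->
  ((2 * n.+1 - m.+1) ^_ (n.+1 - i) * (n + i)`! * n`! =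
   m`! * (2 * n.+1 - m.+1)`! * ((n - i)`! * i`!) * ('C(n, i) * 'C(i + n, m)))%N.
Proof.
move=> le_mn le_in; set N := (2 * n.+1 - m.+1)%N.
have le_len : (n.+1 - i <= N)%N by rewrite /N; lia.
have rest : (N - (n.+1 - i) = i + n - m)%N by rewrite /N; lia.
have le_m_in : (m <= i + n)%N by lia.
have rest_gt0 : (0 < (i + n - m)`!)%N by rewrite fact_gt0.
apply/eqP; rewrite -(eqn_pmul2r rest_gt0); apply/eqP.
have := ffact_fact le_len; have := bin_fact le_in; have := bin_fact le_m_in.
rewrite rest (addnC i n) => fact_nm fact_ni fact_N.
transitivity (N ^_ (n.+1 - i) * (n + i - m)`! * (n + i)`! * n`!)%N; first by ring.
rewrite fact_N -{1}fact_ni -fact_nm; ring.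
Qed.

Theorem mainTheorem10 (R : realFieldType) (k j : nat) (x : R)
  (hk : (1 <= k)%N) (hj1 : (1 <= j)%N) (hjk : (j <= k)%N) :
  \sum_(i < k)
     x ^+ i * (((2 * k - j) ^_ (k - i))%N)%:R
       * (((k - 1 + i)`!)%:R / (((k - 1 - i)`!)%:R * (i`!)%:R))
  = ((j - 1)`!)%:R * ((2 * k - j)`!)%:R / ((k - 1)`!)%:R
      * \sum_(l < j)
          (('C(k - 1, l) * 'C(k - 1, j - 1 - l))%N)%:R
            * x ^+ l * (1 + x) ^+ (k - 1 - l).
Proof.
case: k hk hjk => // n _; case: j hj1 => // m _ le_mn; rewrite !subn1 /=.
under [X in _ = _ * X]eq_bigr => l _.
  rewrite -mulrA expr_shifted_binomial; last by rewrite -ltnS (leq_trans (ltn_ord l) le_mn).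
  rewrite big_distrr /=.
over.
rewrite exchange_big /= big_distrr /=; apply: eq_bigr => i _.
under eq_bigr => l _ do rewrite mulrCA -natrM.
rewrite -big_distrr -natr_sum /= coef_binomial_convolution.
rewrite -mulrA [RHS]mulrCA; congr (_ * _).
rewrite mulrA -!natrM mulrAC -!natrM.
apply/eqP; rewrite eqr_div ?pnatr_eq0 -?lt0n ?muln_gt0 ?fact_gt0 // -!natrM eqr_nat.
have le_in : (i <= n)%N by rewrite -ltnS.
by rewrite falling_factorial_identity //; apply/eqP; exact: mulnAC.
Qed.
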